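(* For a graph $G$ and integer $\tau\ge 1$ define $$Q_{\mathrm{Del\text{-}N}}(G,\tau)=-\min\{\,|V(G)|-|V(G^* )| : G^*\subseteq G,\ \deg(G^* )\le\tau\,\},$$ the negative of the minimum number of nodes whose deletion (with incident edges) leaves maximum degree at most $\tau$. Then: (1) for fixed $G$, $Q_{\mathrm{Del\text{-}N}}(G,\tau)$ is non-decreasing in $\tau$ and equals $0$ for $\tau\ge\deg(G)$; (2) for any node-neighboring graphs $G,G'$, $|Q_{\mathrm{Del\text{-}N}}(G,\tau)-Q_{\mathrm{Del\text{-}N}}(G',\tau)|\le1$ for all $\tau$; (3) for node-neighboring $G,G'$ with $G\subseteq G'$, $Q_{\mathrm{Del\text{-}N}}(G,\tau)\ge Q_{\mathrm{Del\text{-}N}}(G',\tau)$ for all $\tau$.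
   Context: Graphs are finite, simple, undirected; $\deg(G)$ is the maximum degree. For graphs $H,G$, $H\subseteq G$ means $H$ is obtained from $G$ by deleting a (possibly empty) set of nodes together with all edges incident to them. Two graphs $G,G'$ are node-neighboring if one is obtained from the other by deleting a single node together with its incident edges. *)

From mathcomp Require Import all_boot all_order all_algebra.
Set Implicit Arguments. Unset Strict Implicit. Unset Printing Implicit Defensive.
Import Order.TTheory GRing.Theory Num.Theory.

(* A finite simple graph is represented by a vertex set V : {set T} inside an
   ambient finite type T, with a symmetric irreflexive edge relation e : rel T.
   A subgraph H ⊆ G in the sense of the paper (node deletion) is the induced
   subgraph on a subset S ⊆ V. *)

Definition degIn (T : finType) (e : rel T) (S : {set T}) (x : T) : nat :=
  #|[set y in S | e x y]|.

Definition maxdeg (T : finType) (e : rel T) (S : {set T}) : nat :=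
  \max_(x in S) degIn e S x.

(* minimum number of nodes to delete from (V,e) so that max degree <= tau;
   the empty set is always feasible, so #|V| is a valid default. *)
Definition minDelN (T : finType) (e : rel T) (V : {set T}) (tau : nat) : nat :=
  \big[minn/#|V|]_(S : {set T} | (S \subset V) && (maxdeg e S <= tau))
     (#|V| - #|S|).

Definition QDelN (T : finType) (e : rel T) (V : {set T}) (tau : nat) : int :=
  - (minDelN e V tau)%:Z.

From mathcomp Require Import all_boot all_order all_algebra zify.
Import Order.TTheory GRing.Theory Num.Theory.

Set Implicit Arguments.
Unset Strict Implicit.

(* Call a set S of kept nodes feasible when the graph induced on S has
   maximum degree at most tau.  Induced degrees only drop when nodes are
   removed, and raising tau only enlarges the feasible family.  For A a subset
   of V, an optimal S for V cut down to A :&: S is feasible for A and leaves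
   no more nodes of A outside it, while an optimal set for A stays feasible
   for V at the extra cost of the nodes of V :\: A; for A = V :\ v this
   traps the optimum for A between that for V minus one and that for V. *)

Section DeletionDistance.

Variables (T : finType) (e : rel T).

Lemma maxdegS (A B : {set T}) : A \subset B -> maxdeg e A <= maxdeg e B.
Proof.
move=> sAB; apply/bigmax_leqP => x xA.
apply: leq_trans (leq_bigmax_cond _ (subsetP sAB x xA)).
apply: subset_leq_card; apply/subsetP => y.
by rewrite !inE => /andP[yA ->]; rewrite (subsetP sAB y yA).
Qed.

Lemma maxdeg_set0 : maxdeg e set0 = 0.
Proof. by rewrite /maxdeg big_pred0 // => x; rewrite inE. Qed.

Lemma minDelN_le (tau : nat) (V S : {set T}) :
  S \subset V -> maxdeg e S <= tau -> minDelN e V tau <= #|V :\: S|.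
Proof.
move=> sSV degS; rewrite cardsD (setIidPr sSV).
(* [minn] is convertible to [Order.min] on [nat]. *)
have := bigmin_le_cond #|V|
  (P := fun S : {set T} => (S \subset V) && (maxdeg e S <= tau))
  (fun S => #|V| - #|S|).
by move/(_ S); rewrite sSV degS; apply.
Qed.

Lemma minDelN_attained (tau : nat) (V : {set T}) :
  exists2 S : {set T}, (S \subset V) && (maxdeg e S <= tau) &
    minDelN e V tau = #|V :\: S|.
Proof.
pose attained n := exists2 S : {set T},
  (S \subset V) && (maxdeg e S <= tau) & n = #|V :\: S|.
apply: (big_ind attained).
- by exists set0; rewrite ?sub0set ?maxdeg_set0 // setD0.
- move=> _ _ [S1 feas1 ->] [S2 feas2 ->].
  by rewrite /minn; case: ltnP => _; [exists S1 | exists S2].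
- by move=> S feasS; exists S; rewrite // cardsD (setIidPr (proj1 (andP feasS))).
Qed.

Lemma minDelN_nonincreasing (V : {set T}) (sigma tau : nat) :
  sigma <= tau -> minDelN e V tau <= minDelN e V sigma.
Proof.
move=> le_sigma_tau; have [S /andP[sSV degS] ->] := minDelN_attained sigma V.
exact: minDelN_le sSV (leq_trans degS le_sigma_tau).
Qed.

Lemma minDelN_eq0 (V : {set T}) (tau : nat) :
  maxdeg e V <= tau -> minDelN e V tau = 0.
Proof. by move/(minDelN_le (subxx V)); rewrite setDv cards0 leqn0 => /eqP. Qed.

Lemma minDelN_subset (A V : {set T}) (tau : nat) :
  A \subset V -> minDelN e A tau <= minDelN e V tau.
Proof.
move=> sAV; have [S /andP[sSV degS] ->] := minDelN_attained tau V.
have degSA : maxdeg e (A :&: S) <= tau :=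
  leq_trans (maxdegS (subsetIr A S)) degS.
apply: leq_trans (minDelN_le (subsetIl A S) degSA) _.
by rewrite setDIr setDv set0U; apply/subset_leq_card/setSD.
Qed.

Lemma minDelN_le_add_setD (A V : {set T}) (tau : nat) :
  A \subset V -> minDelN e V tau <= minDelN e A tau + #|V :\: A|.
Proof.
move=> sAV; have [S /andP[sSA degS] ->] := minDelN_attained tau A.
apply: leq_trans (minDelN_le (subset_trans sSA sAV) degS) _.
apply: leq_trans (leq_card_setU _ _); apply/subset_leq_card/subsetP => x.
by rewrite !inE; case: (x \in A); rewrite ?andbT ?andbF ?orbF // => /andP[].
Qed.

End DeletionDistance.

Local Open Scope ring_scope.

Theorem mainTheorem4 :
  (* (1) monotone in tau, and 0 once tau >= deg(G) *)
  (forall (T : finType) (e : rel T), symmetric e -> irreflexive e ->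
   forall V : {set T},
     (forall tau1 tau2 : nat, (0 < tau1)%N -> (tau1 <= tau2)%N ->
        QDelN e V tau1 <= QDelN e V tau2) /\
     (forall tau : nat, (0 < tau)%N -> (maxdeg e V <= tau)%N ->
        QDelN e V tau = 0)) /\
  (* (2) node-neighboring graphs G and G - v *)
  (forall (T : finType) (e : rel T), symmetric e -> irreflexive e ->
   forall (V : {set T}) (v : T), v \in V ->
   forall tau : nat, (0 < tau)%N ->
     `|QDelN e V tau - QDelN e (V :\ v) tau| <= 1) /\
  (* (3) G = G' - v is the smaller of the two neighbors *)
  (forall (T : finType) (e : rel T), symmetric e -> irreflexive e ->
   forall (V : {set T}) (v : T), v \in V ->
   forall tau : nat, (0 < tau)%N ->
     QDelN e V tau <= QDelN e (V :\ v) tau).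
Proof.
split; [|split] => T e _ _ V.
- split=> [tau1 tau2 _ le_tau12 | tau _ degV].
    by rewrite lerN2 lez_nat minDelN_nonincreasing.
  by rewrite /QDelN minDelN_eq0.
- move=> v vV tau _; rewrite /QDelN.
  have le_del := minDelN_subset e tau (subsetDl V [set v]).
  have le_add := minDelN_le_add_setD e tau (subsetDl V [set v]).
  have card_del : #|V :\: (V :\ v)| = 1%N.
    by rewrite setDDr setDv set0U (setIidPr _) ?cards1 ?sub1set.
  rewrite card_del addn1 in le_add; lia.
- move=> v _ tau _; rewrite lerN2 lez_nat.
  exact: minDelN_subset (subsetDl V [set v]).
Qed.
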